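(* $\mathsf{G}_\mathbb{R} = \mathsf{G}_{\mathrm{rel}}$; that is, an $\mathcal L$-formula is valid over the class of all flows (real-valued semantics) if and only if it is valid over the class of all bi-relational frames.
   Context: Fix a countably infinite set $\mathbb P$ of propositional variables. The language $\mathcal L$ is given by the grammar $\varphi,\psi ::= p \mid \varphi\wedge\psi \mid \varphi\vee\psi \mid \varphi\Rightarrow\psi \mid \varphi\Leftarrow\psi \mid \mathsf X\varphi \mid \mathsf Y\varphi \mid \mathsf G\varphi \mid \mathsf H\varphi \mid \varphi\,\mathsf U\,\psi \mid \varphi\,\mathsf S\,\psi$ with $p\in\mathbb P$ ($\Leftarrow$ is co-implication). Abbreviations: $\top:=p_0\Rightarrow p_0$, $\bot:=p_0\Leftarrow p_0$ for a fixed $p_0\in\mathbb P$, $\neg\varphi:=\varphi\Rightarrow\bot$, $\varphi\Leftrightarrow\psi:=(\varphi\Rightarrow\psi)\wedge(\psi\Rightarrow\varphi)$, $\mathsf F\varphi:=\top\,\mathsf U\,\varphi$, $\mathsf P\varphi:=\top\,\mathsf S\,\varphi$. Real-valued semantics: a flow is a pair $(T,S)$ with $S\colon T\to T$ a bijection. A real valuation is $V\colon\mathcal L\times T\to[0,1]$ such that for all $t$: $V(\varphi\wedge\psi,t)=\min\{V(\varphi,t),V(\psi,t)\}$; $V(\varphi\vee\psi,t)=\max\{V(\varphi,t),V(\psi,t)\}$; $V(\varphi\Rightarrow\psi,t)=1$ if $V(\varphi,t)\le V(\psi,t)$ and $=V(\psi,t)$ otherwise; $V(\varphi\Leftarrow\psi,t)=0$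 if $V(\varphi,t)\le V(\psi,t)$ and $=V(\varphi,t)$ otherwise; $V(\mathsf X\varphi,t)=V(\varphi,S(t))$; $V(\mathsf Y\varphi,t)=V(\varphi,S^{-1}(t))$; $V(\mathsf G\varphi,t)=\inf_{n\ge0}V(\varphi,S^n(t))$; $V(\mathsf H\varphi,t)=\inf_{n\ge0}V(\varphi,S^{-n}(t))$; $V(\varphi\,\mathsf U\,\psi,t)=\sup_{n\ge0}\min\{V(\varphi,S^0(t)),\dots,V(\varphi,S^{n-1}(t)),V(\psi,S^n(t))\}$; $V(\varphi\,\mathsf S\,\psi,t)=\sup_{n\ge0}\min\{V(\varphi,S^0(t)),\dots,V(\varphi,S^{-(n-1)}(t)),V(\psi,S^{-n}(t))\}$. $\mathsf G_\mathbb R$ is the set of $\varphi$ with $V(\varphi,t)=1$ for every flow, every real valuation on it and every $t$. Bi-relational semantics: a bi-relational frame is $(W,T,\le,S)$ with $(W,\le)$ a linear order and $(T,S)$ a flow. A bi-relational valuation is $[\![\cdot]\!]\colon\mathcal L\to 2^{W\times T}$ with each $[\![p]\!]$ downward closed in the first coordinate (if $(w,t)\in[\![p]\!]$ and $v\le w$ then $(v,t)\in[\![p]\!]$), and: $[\![\varphi\wedge\psi]\!]=[\![\varphi]\!]\cap[\![\psi]\!]$; $[\![\varphi\vee\psi]\!]=[\![\varphi]\!]\cup[\![\psi]\!]$; $(w,t)\in[\![\varphi\Rightarrow\psi]\!]$ iff for all $v\le w$, $(v,t)\in[\![\varphi]\!]$ implies $(v,t)\in[\![\psi]\!]$; $(w,t)\in[\![\varphi\Leftarrow\psi]\!]$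 iff there is $v\ge w$ with $(v,t)\in[\![\varphi]\!]$ and $(v,t)\notin[\![\psi]\!]$; $(w,t)\in[\![\mathsf X\varphi]\!]$ iff $(w,S(t))\in[\![\varphi]\!]$; $(w,t)\in[\![\mathsf Y\varphi]\!]$ iff $(w,S^{-1}(t))\in[\![\varphi]\!]$; $(w,t)\in[\![\mathsf G\varphi]\!]$ iff $(w,S^n(t))\in[\![\varphi]\!]$ for all $n\ge0$; $(w,t)\in[\![\mathsf H\varphi]\!]$ iff $(w,S^{-n}(t))\in[\![\varphi]\!]$ for all $n\ge0$; $(w,t)\in[\![\varphi\,\mathsf U\,\psi]\!]$ iff there is $n\ge0$ with $(w,S^i(t))\in[\![\varphi]\!]$ for $0\le i<n$ and $(w,S^n(t))\in[\![\psi]\!]$; $(w,t)\in[\![\varphi\,\mathsf S\,\psi]\!]$ iff there is $n\ge0$ with $(w,S^{-i}(t))\in[\![\varphi]\!]$ for $0\le i<n$ and $(w,S^{-n}(t))\in[\![\psi]\!]$. $\mathsf G_{\mathrm{rel}}$ is the set of $\varphi$ with $[\![\varphi]\!]=W\times T$ for every bi-relational frame and every valuation on it. *)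

From Stdlib Require Import Reals List.
Import ListNotations.
Open Scope R_scope.

Inductive form : Type :=
| Var   : nat -> form
| And   : form -> form -> form
| Or    : form -> form -> form
| Imp   : form -> form -> form
| Coimp : form -> form -> form
| Next  : form -> form
| Prev  : form -> form
| Glob  : form -> form
| Hist  : form -> form
| Until : form -> form -> form
| Since : form -> form -> form.

Definition Top : form := Imp (Var 0) (Var 0).
Definition Bot : form := Coimp (Var 0) (Var 0).
Definition Neg (a : form) : form := Imp a Bot.

Definition is_flow {T : Type} (S Sinv : T -> T) : Prop :=
  (forall t, Sinv (S t) = t) /\ (forall t, S (Sinv t) = t).

Definition iterf {T : Type} (n : nat) (f : T -> T) (t : T) : T := Nat.iter n f t.

Definition is_glb (E : R -> Prop) (m : R) : Prop :=
  (forall x, E x -> m <= x) /\ (forall b, (forall x, E x -> b <= x) -> b <= m).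

Definition min_prefix (f : nat -> R) (n : nat) (g : R) : R :=
  fold_right Rmin g (map f (seq 0 n)).

Definition real_valuation {T : Type} (S Sinv : T -> T) (V : form -> T -> R) : Prop :=
  (forall a t, 0 <= V a t <= 1) /\
  forall t,
  (forall a b, V (And a b) t = Rmin (V a t) (V b t)) /\
  (forall a b, V (Or a b) t = Rmax (V a t) (V b t)) /\
  (forall a b, V (Imp a b) t = if Rle_dec (V a t) (V b t) then 1 else V b t) /\
  (forall a b, V (Coimp a b) t = if Rle_dec (V a t) (V b t) then 0 else V a t) /\
  (forall a, V (Next a) t = V a (S t)) /\
  (forall a, V (Prev a) t = V a (Sinv t)) /\
  (forall a, is_glb (fun x => exists n, x = V a (iterf n S t)) (V (Glob a) t)) /\
  (forall a, is_glb (fun x => exists n, x = V a (iterf n Sinv t)) (V (Hist a) t)) /\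
  (forall a b, is_lub (fun x => exists n,
        x = min_prefix (fun i => V a (iterf i S t)) n (V b (iterf n S t)))
        (V (Until a b) t)) /\
  (forall a b, is_lub (fun x => exists n,
        x = min_prefix (fun i => V a (iterf i Sinv t)) n (V b (iterf n Sinv t)))
        (V (Since a b) t)).

Definition valid_real (phi : form) : Prop :=
  forall (T : Type) (S Sinv : T -> T) (V : form -> T -> R),
    is_flow S Sinv -> real_valuation S Sinv V -> forall t, V phi t = 1.

Definition linear_order {W : Type} (le : W -> W -> Prop) : Prop :=
  (forall w, le w w) /\
  (forall u v w, le u v -> le v w -> le u w) /\
  (forall u v, le u v -> le v u -> u = v) /\
  (forall u v, le u v \/ le v u).

(* Bi-relational valuation: den a w t  means (w,t) in [[a]]. *)
Definition birel_valuation {W T : Type} (le : W -> W -> Prop) (S Sinv : T -> T)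
    (den : form -> W -> T -> Prop) : Prop :=
  (forall p w v t, den (Var p) w t -> le v w -> den (Var p) v t) /\
  forall w t,
  (forall a b, den (And a b) w t <-> den a w t /\ den b w t) /\
  (forall a b, den (Or a b) w t <-> den a w t \/ den b w t) /\
  (forall a b, den (Imp a b) w t <-> forall v, le v w -> den a v t -> den b v t) /\
  (forall a b, den (Coimp a b) w t <-> exists v, le w v /\ den a v t /\ ~ den b v t) /\
  (forall a, den (Next a) w t <-> den a w (S t)) /\
  (forall a, den (Prev a) w t <-> den a w (Sinv t)) /\
  (forall a, den (Glob a) w t <-> forall n, den a w (iterf n S t)) /\
  (forall a, den (Hist a) w t <-> forall n, den a w (iterf n Sinv t)) /\
  (forall a b, den (Until a b) w t <-> exists n,
      (forall i, (i < n)%nat -> den a w (iterf i S t)) /\ den b w (iterf n S t)) /\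
  (forall a b, den (Since a b) w t <-> exists n,
      (forall i, (i < n)%nat -> den a w (iterf i Sinv t)) /\ den b w (iterf n Sinv t)).

Definition valid_rel (phi : form) : Prop :=
  forall (W T : Type) (le : W -> W -> Prop) (S Sinv : T -> T)
         (den : form -> W -> T -> Prop),
    linear_order le -> is_flow S Sinv -> birel_valuation le S Sinv den ->
    forall w t, den phi w t.

(* Each inclusion turns a countermodel of one kind into one of the
   other kind, with time restricted to the Z-indexed orbit of the refuting
   instant.
   - valid_rel -> valid_real: given a real valuation V, the worlds are the
     reals c in (0,1) differing from every value V a (orbit k), and a holds at
     (c, k) iff c <= V a (orbit k).  Infima (G, H) commute with "c <=", and so
     do suprema (U, S) because c never equals one.  Such c are dense in (0,1),
     since formulas and integers are enumerable and a sequence of reals misses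
     a point of every open interval (nested intervals).
   - valid_real -> valid_rel: given a bi-relational valuation, pick a sample
     world separating a from b at time k for every (a, b, k); the value of a at
     k is the weight sum 2^-(m+1) over the samples m where a holds.  Truth sets
     are downsets of a linear order, hence a chain, on which the weight turns
     meets, joins, infima and suprema into min, max, inf and sup, while the
     separating samples make it strictly monotone where (co-)implication needs
     it. *)

From Stdlib Require Import Reals Lra Lia List ZArith Cantor.
From Stdlib Require Import ClassicalEpsilon.

Local Open Scope R_scope.

Definition enumerable (A : Type) : Prop :=
  exists e : nat -> A, forall a, exists m, e m = a.

Lemma enumerable_of_injection (A : Type) (code : A -> nat) :
  inhabited A -> (forall a b, code a = code b -> a = b) -> enumerable A.
Proof.
  intros inh code_inj.
  exists (fun m => epsilon inh (fun a => code a = m)).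
  intros a; exists (code a).
  apply code_inj, (epsilon_spec inh (fun b => code b = code a)); eauto.
Qed.

Lemma enumerable_prod (A B : Type) :
  enumerable A -> enumerable B -> enumerable (A * B).
Proof.
  intros [eA ontoA] [eB ontoB].
  exists (fun m => let (i, j) := Cantor.of_nat m in (eA i, eB j)).
  intros [a b]; destruct (ontoA a) as [i <-], (ontoB b) as [j <-].
  exists (Cantor.to_nat (i, j)); now rewrite Cantor.cancel_of_to.
Qed.

Lemma pair_code_inj (i j i' j' : nat) :
  Cantor.to_nat (i, j) = Cantor.to_nat (i', j') -> i = i' /\ j = j'.
Proof.
  intros E; apply (f_equal Cantor.of_nat) in E.
  rewrite !Cantor.cancel_of_to in E; now injection E.
Qed.

Fixpoint form_code (a : form) : nat :=
  match a with
  | Var p => Cantor.to_nat (0, p)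
  | And a b => Cantor.to_nat (1, Cantor.to_nat (form_code a, form_code b))
  | Or a b => Cantor.to_nat (2, Cantor.to_nat (form_code a, form_code b))
  | Imp a b => Cantor.to_nat (3, Cantor.to_nat (form_code a, form_code b))
  | Coimp a b => Cantor.to_nat (4, Cantor.to_nat (form_code a, form_code b))
  | Next a => Cantor.to_nat (5, form_code a)
  | Prev a => Cantor.to_nat (6, form_code a)
  | Glob a => Cantor.to_nat (7, form_code a)
  | Hist a => Cantor.to_nat (8, form_code a)
  | Until a b => Cantor.to_nat (9, Cantor.to_nat (form_code a, form_code b))
  | Since a b => Cantor.to_nat (10, Cantor.to_nat (form_code a, form_code b))
  end%nat.

Lemma form_code_inj (a b : form) : form_code a = form_code b -> a = b.
Proof.
  revert b; induction a; intros []; cbn [form_code]; intros E;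
    repeat match goal with
           | E : Cantor.to_nat _ = Cantor.to_nat _ |- _ =>
               apply pair_code_inj in E as [? ?]
           end;
    try discriminate; f_equal; auto.
Qed.

Lemma enumerable_form : enumerable form.
Proof.
  exact (enumerable_of_injection form form_code (inhabits (Var 0)) form_code_inj).
Qed.

Lemma enumerable_Z : enumerable Z.
Proof.
  apply (enumerable_of_injection Z (fun z => Cantor.to_nat (Z.to_nat z, Z.to_nat (- z)))).
  - exact (inhabits 0%Z).
  - intros z z' E; apply pair_code_inj in E; lia.
Qed.

Lemma iterf_intertwine {A B : Type} (f : A -> A) (g : B -> B) (h : A -> B) :
  (forall x, h (f x) = g (h x)) -> forall n x, iterf n g (h x) = h (iterf n f x).
Proof.
  intros hfg n x; induction n as [|n IH]; [reflexivity|].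
  unfold iterf in *; simpl; now rewrite IH, hfg.
Qed.

Lemma Z_flow : is_flow Z.succ Z.pred.
Proof. split; intros; lia. Qed.

Section Orbit.
Context {T : Type} (S Sinv : T -> T) (t0 : T).
Hypothesis flow : is_flow S Sinv.

Definition orbit (k : Z) : T :=
  if Z.leb 0 k then iterf (Z.to_nat k) S t0 else iterf (Z.to_nat (- k)) Sinv t0.

Lemma orbit_succ (k : Z) : orbit (Z.succ k) = S (orbit k).
Proof.
  destruct flow as [SinvS SSinv]; unfold orbit.
  destruct (Z.leb_spec 0 k), (Z.leb_spec 0 (Z.succ k)); try lia.
  - now rewrite Z2Nat.inj_succ by lia.
  - replace k with (-1)%Z by lia; symmetry; apply SSinv.
  - replace (Z.to_nat (- k)) with (Nat.succ (Z.to_nat (- Z.succ k)))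
      by (rewrite <- Z2Nat.inj_succ by lia; f_equal; lia).
    unfold iterf; simpl; symmetry; apply SSinv.
Qed.

Lemma orbit_pred (k : Z) : orbit (Z.pred k) = Sinv (orbit k).
Proof.
  rewrite <- (Z.succ_pred k) at 2; rewrite orbit_succ; symmetry; apply flow.
Qed.

Lemma orbit_iter_S (n : nat) (k : Z) : iterf n S (orbit k) = orbit (iterf n Z.succ k).
Proof. apply iterf_intertwine, orbit_succ. Qed.

Lemma orbit_iter_Sinv (n : nat) (k : Z) :
  iterf n Sinv (orbit k) = orbit (iterf n Z.pred k).
Proof. apply iterf_intertwine, orbit_pred. Qed.

End Orbit.

Lemma le_Rmin_iff (c x y : R) : c <= Rmin x y <-> c <= x /\ c <= y.
Proof. unfold Rmin; destruct Rle_dec; lra. Qed.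

Lemma le_Rmax_iff (c x y : R) : c <= Rmax x y <-> c <= x \/ c <= y.
Proof. unfold Rmax; destruct Rle_dec; lra. Qed.

Lemma min_prefix_S (f : nat -> R) (n : nat) (g : R) :
  min_prefix f (S n) g = Rmin (f 0%nat) (min_prefix (fun i => f (S i)) n g).
Proof. unfold min_prefix; cbn; now rewrite <- seq_shift, map_map. Qed.

Lemma le_min_prefix_iff (c : R) (f : nat -> R) (n : nat) (g : R) :
  c <= min_prefix f n g <-> (forall i, (i < n)%nat -> c <= f i) /\ c <= g.
Proof.
  revert f; induction n as [|n IH]; intros f.
  - cbn; split; [split; [lia|]|]; tauto.
  - rewrite min_prefix_S, le_Rmin_iff, IH; split.
    + intros (h0 & hS & hg); split; [intros [|i] Hi; [|apply hS]; auto; lia | auto].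
    + intros [hf hg]; repeat split; auto; intros; apply hf; lia.
Qed.

Lemma le_glb_iff (E : R -> Prop) (m c : R) :
  is_glb E m -> c <= m <-> (forall x, E x -> c <= x).
Proof.
  intros [lower greatest]; split.
  - intros hc x hx; specialize (lower x hx); lra.
  - apply greatest.
Qed.

Lemma le_lub_iff (E : R -> Prop) (s c : R) :
  is_lub E s -> c <> s -> c <= s <-> (exists x, E x /\ c <= x).
Proof.
  intros [upper least] hcs; split.
  - intros hc; apply NNPP; intros none.
    enough (s <= c) by lra.
    apply least; intros x hx; apply Rnot_lt_le; intros hlt.
    apply none; exists x; split; [|lra]; exact hx.
  - intros (x & hx & hcx); specialize (upper x hx); lra.
Qed.

Lemma le_of_half_pow (x y : R) : (forall N, x <= y + / 2 ^ N) -> x <= y.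
Proof.
  intros hN; apply Rnot_lt_le; intros hyx.
  destruct (pow_lt_1_zero (/ 2) ltac:(rewrite Rabs_pos_eq; lra) (x - y)
              ltac:(lra)) as [N hsmall].
  specialize (hsmall N (le_n N)); specialize (hN N).
  rewrite pow_inv, Rabs_pos_eq in hsmall
    by (apply Rlt_le, Rinv_0_lt_compat, pow_lt; lra).
  lra.
Qed.

(** A countable set of reals misses a point of every open interval *)

Section Avoidance.
Variable u : nat -> R.

Definition avoid_step (z : R) (I : R * R) : R * R :=
  let (a, b) := I in
  if Rle_dec z (a + (b - a) / 3) then (b - (b - a) / 3, b) else (a, a + (b - a) / 3).

Lemma avoid_step_spec (z : R) (I : R * R) : fst I < snd I ->
  fst I <= fst (avoid_step z I) /\ fst (avoid_step z I) < snd (avoid_step z I) /\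
  snd (avoid_step z I) <= snd I /\ (z < fst (avoid_step z I) \/ snd (avoid_step z I) < z).
Proof. destruct I as [a b]; cbn; destruct Rle_dec; cbn; lra. Qed.

(* The n-th interval avoids u 0, ..., u (n-1). *)
Fixpoint avoid_interval (I : R * R) (n : nat) : R * R :=
  match n with
  | O => I
  | S n => avoid_step (u n) (avoid_interval I n)
  end.

Variable I : R * R.
Hypothesis I_proper : fst I < snd I.

Lemma avoid_interval_proper (n : nat) :
  fst (avoid_interval I n) < snd (avoid_interval I n).
Proof. induction n; cbn; [|apply avoid_step_spec]; auto. Qed.

Lemma avoid_interval_nested (n m : nat) : (n <= m)%nat ->
  fst (avoid_interval I n) <= fst (avoid_interval I m) /\
  snd (avoid_interval I m) <= snd (avoid_interval I n).
Proof.
  induction 1 as [|m _ IH]; [lra|].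
  pose proof (avoid_step_spec (u m) _ (avoid_interval_proper m)); cbn; lra.
Qed.

Lemma avoid_interval_cross (n m : nat) :
  fst (avoid_interval I n) <= snd (avoid_interval I m).
Proof.
  pose proof (avoid_interval_nested n (max n m) ltac:(lia)).
  pose proof (avoid_interval_nested m (max n m) ltac:(lia)).
  pose proof (avoid_interval_proper (max n m)); lra.
Qed.

(* The supremum of the left endpoints lies in every interval, hence is none
   of the u m. *)
Lemma avoid_closed : exists c, fst I <= c <= snd I /\ forall m, c <> u m.
Proof.
  set (E := fun x => exists n, x = fst (avoid_interval I n)).
  assert (bounded : bound E).
  { exists (snd I); intros x [n ->]; exact (avoid_interval_cross n 0). }
  destruct (completeness E bounded (ex_intro _ (fst I) (ex_intro _ 0%nat eq_refl)))
    as [c [upper least]].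
  assert (above : forall n, fst (avoid_interval I n) <= c)
    by (intros n; apply upper; now exists n).
  assert (below : forall n, c <= snd (avoid_interval I n))
    by (intros n; apply least; intros x [k ->]; apply avoid_interval_cross).
  exists c; split; [exact (conj (above 0%nat) (below 0%nat))|].
  intros m ->.
  pose proof (avoid_step_spec (u m) _ (avoid_interval_proper m)).
  pose proof (above (S m)); pose proof (below (S m)); cbn in *; lra.
Qed.

End Avoidance.

Lemma avoid_countable (u : nat -> R) (x y : R) :
  x < y -> exists c, x < c < y /\ forall m, c <> u m.
Proof.
  intros hxy.
  destruct (avoid_closed u (x + (y - x) / 3, y - (y - x) / 3)) as [c [hc avoids]];
    cbn in *; [lra|].
  exists c; split; [lra | exact avoids].
Qed.

(** The weight of a set of naturals: sum of 2^-(m+1) over its elements *)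

Definition indicator (P : Prop) (x : R) : R :=
  if excluded_middle_informative P then x else 0.

Fixpoint partial_weight (P : nat -> Prop) (N : nat) : R :=
  match N with
  | O => 0
  | S n => partial_weight P n + indicator (P n) (/ 2 ^ S n)
  end.

Lemma half_pow_pos (n : nat) : 0 < / 2 ^ n.
Proof. apply Rinv_0_lt_compat, pow_lt; lra. Qed.

Lemma half_pow_S (n : nat) : / 2 ^ S n = / 2 ^ n / 2.
Proof. cbn; rewrite Rinv_mult; lra. Qed.

Lemma indicator_bounds (P : Prop) (x : R) : 0 <= x -> 0 <= indicator P x <= x.
Proof. unfold indicator; destruct excluded_middle_informative; lra. Qed.

Lemma partial_weight_ext (P Q : nat -> Prop) (N : nat) :
  (forall m, (m < N)%nat -> P m <-> Q m) -> partial_weight P N = partial_weight Q N.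
Proof.
  induction N as [|N IH]; intros PQ; cbn; [reflexivity|].
  rewrite IH by (intros; apply PQ; lia).
  specialize (PQ N ltac:(lia)); unfold indicator.
  destruct (excluded_middle_informative (P N)), (excluded_middle_informative (Q N));
    tauto.
Qed.

Lemma partial_weight_incr (P : nat -> Prop) (N M : nat) : (N <= M)%nat ->
  partial_weight P N <= partial_weight P M <= partial_weight P N + / 2 ^ N - / 2 ^ M.
Proof.
  induction 1 as [|M _ IH]; [lra|].
  pose proof (indicator_bounds (P M) _ (Rlt_le _ _ (half_pow_pos (S M)))).
  cbn [partial_weight]; rewrite half_pow_S in *; lra.
Qed.

Lemma partial_weight_le_1 (P : nat -> Prop) (N : nat) : partial_weight P N <= 1.
Proof.
  pose proof (partial_weight_incr P 0 N ltac:(lia)); pose proof (half_pow_pos N).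
  cbn in *; lra.
Qed.

Lemma partial_weight_full (N : nat) : partial_weight (fun _ => True) N = 1 - / 2 ^ N.
Proof.
  induction N as [|N IH]; cbn [partial_weight]; [cbn; lra|].
  rewrite IH; unfold indicator; destruct excluded_middle_informative; [|tauto].
  rewrite half_pow_S; lra.
Qed.

Lemma partial_weight_gap (P Q : nat -> Prop) (m0 N : nat) :
  (forall m, Q m -> P m) -> P m0 -> ~ Q m0 ->
  partial_weight Q N + indicator (m0 < N)%nat (/ 2 ^ S m0) <= partial_weight P N.
Proof.
  intros QP Pm0 nQm0; induction N as [|N IH]; cbn [partial_weight].
  - unfold indicator; destruct excluded_middle_informative; [lia | lra].
  - pose proof (half_pow_pos (S N)); unfold indicator in *.
    destruct (excluded_middle_informative (Q N)) as [QN|nQN],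
             (excluded_middle_informative (P N)) as [PN|nPN];
      [| exfalso; auto | |];
      destruct (excluded_middle_informative (m0 < N)%nat),
               (excluded_middle_informative (m0 < S N)%nat);
      try lia; try lra;
      assert (m0 = N) by lia; subst; first [tauto | lra].
Qed.

Lemma partial_weight_mono (P Q : nat -> Prop) (N : nat) :
  (forall m, Q m -> P m) -> partial_weight Q N <= partial_weight P N.
Proof.
  intros QP; induction N as [|N IH]; cbn [partial_weight]; [lra|]; unfold indicator.
  pose proof (half_pow_pos (S N)).
  destruct (excluded_middle_informative (Q N)), (excluded_middle_informative (P N));
    try lra; exfalso; auto.
Qed.

Definition partial_weights (P : nat -> Prop) (x : R) : Prop :=
  exists N, x = partial_weight P N.

Lemma partial_weights_bound (P : nat -> Prop) : bound (partial_weights P).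
Proof. exists 1; intros x [N ->]; apply partial_weight_le_1. Qed.

Definition weight (P : nat -> Prop) : R :=
  proj1_sig (completeness (partial_weights P) (partial_weights_bound P)
               (ex_intro _ 0 (ex_intro _ 0%nat eq_refl))).

Lemma weight_ge (P : nat -> Prop) (N : nat) : partial_weight P N <= weight P.
Proof.
  unfold weight; destruct completeness as [w lub]; apply (proj1 lub); now exists N.
Qed.

Lemma weight_le (P : nat -> Prop) (b : R) :
  (forall N, partial_weight P N <= b) -> weight P <= b.
Proof.
  unfold weight; destruct completeness as [w lub]; intros hb.
  apply (proj2 lub); intros x [N ->]; apply hb.
Qed.

Lemma weight_tail (P : nat -> Prop) (N : nat) : weight P <= partial_weight P N + / 2 ^ N.
Proof.
  apply weight_le; intros M; destruct (Nat.le_ge_cases N M) as [NM|MN].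
  - pose proof (partial_weight_incr P N M NM); pose proof (half_pow_pos M); lra.
  - pose proof (partial_weight_incr P M N MN); pose proof (half_pow_pos N); lra.
Qed.

Lemma weight_bounds (P : nat -> Prop) : 0 <= weight P <= 1.
Proof.
  split; [exact (weight_ge P 0) | apply weight_le, partial_weight_le_1].
Qed.

Lemma weight_mono (P Q : nat -> Prop) : (forall m, Q m -> P m) -> weight Q <= weight P.
Proof.
  intros QP; apply weight_le; intros N.
  apply (Rle_trans _ _ _ (partial_weight_mono P Q N QP)), weight_ge.
Qed.

Lemma weight_ext (P Q : nat -> Prop) : (forall m, P m <-> Q m) -> weight P = weight Q.
Proof. intros PQ; apply Rle_antisym; apply weight_mono; firstorder. Qed.

Lemma weight_full : weight (fun _ => True) = 1.
Proof.
  apply Rle_antisym; [apply weight_bounds|].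
  apply le_of_half_pow; intros N.
  pose proof (weight_ge (fun _ => True) N); rewrite partial_weight_full in *; lra.
Qed.

Lemma weight_empty : weight (fun _ => False) = 0.
Proof.
  apply Rle_antisym; [|apply weight_bounds].
  apply weight_le; intros N; induction N; cbn [partial_weight]; [lra|].
  unfold indicator; destruct excluded_middle_informative; [tauto | lra].
Qed.

Lemma weight_strict (P Q : nat -> Prop) (m0 : nat) :
  (forall m, Q m -> P m) -> P m0 -> ~ Q m0 -> weight Q < weight P.
Proof.
  intros QP Pm0 nQm0; pose proof (half_pow_pos (S m0)).
  enough (weight Q <= weight P - / 2 ^ S m0) by lra.
  apply weight_le; intros N.
  pose proof (partial_weight_incr Q N (max N (S m0)) ltac:(lia)).
  pose proof (partial_weight_gap P Q m0 (max N (S m0)) QP Pm0 nQm0).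
  pose proof (weight_ge P (max N (S m0))).
  unfold indicator in *; destruct excluded_middle_informative; [lra | lia].
Qed.

Definition chain (F : nat -> nat -> Prop) : Prop :=
  forall n n', (forall m, F n m -> F n' m) \/ (forall m, F n' m -> F n m).

Lemma chain_meets_union (F : nat -> nat -> Prop) (N : nat) : chain F ->
  exists n, forall m, (m < N)%nat -> (exists n', F n' m) -> F n m.
Proof.
  intros F_chain; induction N as [|N [n Fn]]; [exists 0%nat; lia|].
  destruct (classic (exists n', F n' N)) as [[n' Fn'N]|none].
  - destruct (F_chain n n') as [sub|sub]; [exists n' | exists n];
      intros m Hm Hex; destruct (Nat.eq_dec m N) as [->|]; auto;
      [apply sub|]; apply Fn; auto; lia.
  - exists n; intros m Hm Hex; destruct (Nat.eq_dec m N) as [->|]; [tauto|].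
    apply Fn; auto; lia.
Qed.

Lemma chain_meets_inter (F : nat -> nat -> Prop) (N : nat) : chain F ->
  exists n, forall m, (m < N)%nat -> F n m -> forall n', F n' m.
Proof.
  intros F_chain; induction N as [|N [n Fn]]; [exists 0%nat; lia|].
  destruct (classic (forall n', F n' N)) as [all|[n' nFn'N]%not_all_ex_not].
  - exists n; intros m Hm Fm; destruct (Nat.eq_dec m N) as [->|]; auto.
    apply Fn; auto; lia.
  - destruct (F_chain n n') as [sub|sub]; [exists n | exists n'];
      intros m Hm Fm; destruct (Nat.eq_dec m N) as [->|];
      try (exfalso; auto; fail); apply Fn; auto; lia.
Qed.

Lemma weight_union_chain (F : nat -> nat -> Prop) : chain F ->
  is_lub (fun x => exists n, x = weight (F n)) (weight (fun m => exists n, F n m)).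
Proof.
  intros F_chain; split.
  - intros x [n ->]; apply weight_mono; eauto.
  - intros b hb; apply le_of_half_pow; intros N.
    destruct (chain_meets_union F N F_chain) as [n agree].
    pose proof (weight_tail (fun m => exists n, F n m) N).
    rewrite (partial_weight_ext _ (F n) N) in * by (intros m Hm; split; eauto).
    pose proof (weight_ge (F n) N); assert (weight (F n) <= b) by (apply hb; eauto).
    lra.
Qed.

Lemma weight_inter_chain (F : nat -> nat -> Prop) : chain F ->
  is_glb (fun x => exists n, x = weight (F n)) (weight (fun m => forall n, F n m)).
Proof.
  intros F_chain; split.
  - intros x [n ->]; apply weight_mono; eauto.
  - intros b hb; apply le_of_half_pow; intros N.
    destruct (chain_meets_inter F N F_chain) as [n agree].
    pose proof (weight_tail (F n) N).
    rewrite (partial_weight_ext (F n) (fun m => forall n, F n m) N) in *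
      by (intros m Hm; split; eauto).
    pose proof (weight_ge (fun m => forall n, F n m) N).
    assert (b <= weight (F n)) by (apply hb; eauto).
    lra.
Qed.

(** The weight of a downset of a sampled linear order *)

Section Mass.
Context {W : Type} (le : W -> W -> Prop) (sample : nat -> W).
Hypothesis lin : linear_order le.

Definition downset (X : W -> Prop) : Prop := forall w v, X w -> le v w -> X v.

Definition mass (X : W -> Prop) : R := weight (fun m => X (sample m)).

Lemma downsets_chain (X Y : W -> Prop) : downset X -> downset Y ->
  (forall w, X w -> Y w) \/ (forall w, Y w -> X w).
Proof.
  intros downX downY; destruct (classic (forall w, X w -> Y w)) as [|notsub]; [auto|].
  right; apply not_all_ex_not in notsub as [x notsub].
  apply imply_to_and in notsub as [Xx nYx].
  intros y Yy; destruct lin as (_ & _ & _ & total); destruct (total x y).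
  - exfalso; eauto.
  - eauto.
Qed.

Lemma mass_ext (X Y : W -> Prop) : (forall w, X w <-> Y w) -> mass X = mass Y.
Proof. intros; apply weight_ext; auto. Qed.

Lemma mass_mono (X Y : W -> Prop) : (forall w, X w -> Y w) -> mass X <= mass Y.
Proof. intros; apply weight_mono; auto. Qed.

Lemma mass_strict (X Y : W -> Prop) (m : nat) :
  (forall w, X w -> Y w) -> Y (sample m) -> ~ X (sample m) -> mass X < mass Y.
Proof. intros; eapply weight_strict; eauto. Qed.

Lemma mass_and (X Y : W -> Prop) : downset X -> downset Y ->
  mass (fun w => X w /\ Y w) = Rmin (mass X) (mass Y).
Proof.
  intros downX downY; destruct (downsets_chain X Y downX downY) as [sub|sub].
  - rewrite Rmin_left by (apply mass_mono, sub); apply mass_ext; firstorder.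
  - rewrite Rmin_right by (apply mass_mono, sub); apply mass_ext; firstorder.
Qed.

Lemma mass_or (X Y : W -> Prop) : downset X -> downset Y ->
  mass (fun w => X w \/ Y w) = Rmax (mass X) (mass Y).
Proof.
  intros downX downY; destruct (downsets_chain X Y downX downY) as [sub|sub].
  - rewrite Rmax_right by (apply mass_mono, sub); apply mass_ext; firstorder.
  - rewrite Rmax_left by (apply mass_mono, sub); apply mass_ext; firstorder.
Qed.

Lemma mass_prefix (A : nat -> W -> Prop) (B : W -> Prop) (n : nat) :
  (forall i, downset (A i)) -> downset B ->
  mass (fun w => (forall i, (i < n)%nat -> A i w) /\ B w) =
  min_prefix (fun i => mass (A i)) n (mass B).
Proof.
  revert A; induction n as [|n IH]; intros A downA downB.
  - apply mass_ext; intros w; split; [tauto|]; split; [lia | auto].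
  - rewrite min_prefix_S, <- (IH (fun i => A (S i))), <- mass_and by
      (auto; intros w v [hA hB] hvw; split; eauto; intros i Hi; eapply downA; eauto).
    apply mass_ext; intros w; split.
    + intros [hA hB]; repeat split; auto; intros; apply hA; lia.
    + intros (h0 & hS & hB); split; auto; intros [|i] Hi; auto; apply hS; lia.
Qed.

Lemma chain_of_downsets (F : nat -> W -> Prop) : (forall n, downset (F n)) ->
  chain (fun n m => F n (sample m)).
Proof.
  intros downF n n'; destruct (downsets_chain _ _ (downF n) (downF n')); auto.
Qed.

Lemma mass_union (F : nat -> W -> Prop) : (forall n, downset (F n)) ->
  is_lub (fun x => exists n, x = mass (F n)) (mass (fun w => exists n, F n w)).
Proof. intros downF; exact (weight_union_chain _ (chain_of_downsets F downF)). Qed.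

Lemma mass_inter (F : nat -> W -> Prop) : (forall n, downset (F n)) ->
  is_glb (fun x => exists n, x = mass (F n)) (mass (fun w => forall n, F n w)).
Proof. intros downF; exact (weight_inter_chain _ (chain_of_downsets F downF)). Qed.

End Mass.

(** From a bi-relational valuation to a real valuation on the integers *)

Section FrameToReal.
Context {W T : Type} (le : W -> W -> Prop) (S Sinv : T -> T).
Context (den : form -> W -> T -> Prop).
Hypothesis lin : linear_order le.
Hypothesis flow : is_flow S Sinv.
Hypothesis val : birel_valuation le S Sinv den.

(* Persistence: truth sets are downsets, so at a fixed time they form a chain. *)
Lemma den_downset (a : form) (t : T) : downset le (fun w => den a w t).
Proof.
  destruct val as [var_down clauses]; destruct lin as (_ & trans & _ & _).
  revert t; induction a; unfold downset in *; intros t w v Hw Hvw;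
    destruct (clauses w t) as (hA & hO & hI & hC & hN & hP & hG & hH & hU & hS);
    destruct (clauses v t) as (hA' & hO' & hI' & hC' & hN' & hP' & hG' & hH' & hU' & hS').
  - eauto.
  - apply hA'; apply hA in Hw as [? ?]; split; eauto.
  - apply hO'; apply hO in Hw as [?|?]; [left | right]; eauto.
  - apply hI'; rewrite hI in Hw; intros u Hu; apply Hw; eauto.
  - apply hC'; apply hC in Hw as (u & Hu & ?); exists u; split; eauto.
  - apply hN'; apply hN in Hw; eauto.
  - apply hP'; apply hP in Hw; eauto.
  - apply hG'; rewrite hG in Hw; intros n; eauto.
  - apply hH'; rewrite hH in Hw; intros n; eauto.
  - apply hU'; apply hU in Hw as (n & ? & ?); exists n; split; eauto.
  - apply hS'; apply hS in Hw as (n & ? & ?); exists n; split; eauto.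
Qed.

Lemma imp_full (a b : form) (t : T) :
  (forall w, den a w t -> den b w t) -> forall w, den (Imp a b) w t.
Proof. intros ab w; apply (proj2 val w t); auto. Qed.

Lemma imp_collapse (a b : form) (t : T) (x : W) : den a x t -> ~ den b x t ->
  forall w, den (Imp a b) w t <-> den b w t.
Proof.
  intros ax nbx w; destruct lin as (refl & _ & _ & total).
  destruct (proj2 val w t) as (_ & _ & -> & _); split.
  - intros hw; destruct (total w x).
    + apply hw; [apply refl | eapply den_downset; eauto].
    + exfalso; apply nbx, hw; auto.
  - intros bw v hvw _; eapply den_downset; eauto.
Qed.

Lemma coimp_empty (a b : form) (t : T) :
  (forall w, den a w t -> den b w t) -> forall w, ~ den (Coimp a b) w t.
Proof. intros ab w hw; apply (proj2 val w t) in hw as (v & _ & ? & ?); auto. Qed.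

Lemma coimp_collapse (a b : form) (t : T) (x : W) : den a x t -> ~ den b x t ->
  forall w, den (Coimp a b) w t <-> den a w t.
Proof.
  intros ax nbx w; destruct lin as (refl & _ & _ & total).
  destruct (proj2 val w t) as (_ & _ & _ & -> & _); split.
  - intros (v & hwv & av & _); eapply den_downset; eauto.
  - intros aw; destruct (classic (den b w t)) as [bw|nbw].
    + exists x; destruct (total x w); [exfalso; eapply nbx, den_downset; eauto | auto].
    + exists w; auto.
Qed.

Variable enum : nat -> form * form * Z.
Hypothesis enum_onto : forall x, exists m, enum m = x.
Variables (w0 : W) (t0 : T).

Local Notation orb := (orbit S Sinv t0).

Definition separates (a b : form) (k : Z) (w : W) : Prop :=
  den a w (orb k) /\ ~ den b w (orb k).

Definition sample (m : nat) : W :=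
  let '(a, b, k) := enum m in epsilon (inhabits w0) (separates a b k).

Lemma sample_separates (a b : form) (k : Z) (x : W) :
  separates a b k x -> exists m, separates a b k (sample m).
Proof.
  intros hx; destruct (enum_onto (a, b, k)) as [m hm]; exists m.
  unfold sample; rewrite hm; apply epsilon_spec; eauto.
Qed.

Definition weighted_val (a : form) (k : Z) : R := mass sample (fun w => den a w (orb k)).

Lemma weighted_val_separation (a b : form) (k : Z) (x : W) :
  den a x (orb k) -> ~ den b x (orb k) -> weighted_val b k < weighted_val a k.
Proof.
  intros ax nbx; destruct (sample_separates a b k x (conj ax nbx)) as [m [am nbm]].
  apply (mass_strict _ _ _ m); auto.
  destruct (downsets_chain le lin _ _ (den_downset a (orb k)) (den_downset b (orb k)))
    as [ab|ba]; [exfalso; auto | exact ba].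
Qed.

(* Truth values of (co-)implication: entailment gives 1 (resp. 0); otherwise
   the truth set collapses and separation decides the comparison. *)
Lemma weighted_imp (a b : form) (k : Z) :
  weighted_val (Imp a b) k =
  if Rle_dec (weighted_val a k) (weighted_val b k) then 1 else weighted_val b k.
Proof.
  destruct (classic (forall w, den a w (orb k) -> den b w (orb k))) as [ab|nab].
  - destruct Rle_dec as [_|nle]; [|exfalso; apply nle, mass_mono, ab].
    rewrite <- weight_full; apply weight_ext; split; [tauto|].
    intros _; apply imp_full, ab.
  - apply not_all_ex_not in nab as [x nab]; apply imply_to_and in nab as [ax nbx].
    pose proof (weighted_val_separation a b k x ax nbx).
    destruct Rle_dec; [lra|].
    apply mass_ext, (imp_collapse a b (orb k) x ax nbx).
Qed.

Lemma weighted_coimp (a b : form) (k : Z) :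
  weighted_val (Coimp a b) k =
  if Rle_dec (weighted_val a k) (weighted_val b k) then 0 else weighted_val a k.
Proof.
  destruct (classic (forall w, den a w (orb k) -> den b w (orb k))) as [ab|nab].
  - destruct Rle_dec as [_|nle]; [|exfalso; apply nle, mass_mono, ab].
    rewrite <- weight_empty; apply weight_ext; split; [|tauto].
    apply coimp_empty, ab.
  - apply not_all_ex_not in nab as [x nab]; apply imply_to_and in nab as [ax nbx].
    pose proof (weighted_val_separation a b k x ax nbx).
    destruct Rle_dec; [lra|].
    apply mass_ext, (coimp_collapse a b (orb k) x ax nbx).
Qed.

Lemma weighted_glb (f : T -> T) (g : Z -> Z)
    (fg : forall n k, iterf n f (orb k) = orb (iterf n g k)) (a c : form) (k : Z) :
  (forall w, den c w (orb k) <-> forall n, den a w (iterf n f (orb k))) ->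
  is_glb (fun x => exists n, x = weighted_val a (iterf n g k)) (weighted_val c k).
Proof.
  intros hc; unfold weighted_val.
  rewrite (mass_ext sample _ (fun w => forall n, den a w (orb (iterf n g k))))
    by (intros w; rewrite hc; setoid_rewrite fg; reflexivity).
  apply (mass_inter le); [exact lin | intros n; apply den_downset].
Qed.

Lemma weighted_lub (f : T -> T) (g : Z -> Z)
    (fg : forall n k, iterf n f (orb k) = orb (iterf n g k)) (a b c : form) (k : Z) :
  (forall w, den c w (orb k) <-> exists n,
      (forall i, (i < n)%nat -> den a w (iterf i f (orb k))) /\ den b w (iterf n f (orb k))) ->
  is_lub (fun x => exists n, x = min_prefix (fun i => weighted_val a (iterf i g k)) n
                                   (weighted_val b (iterf n g k)))
         (weighted_val c k).
Proof.
  intros hc.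
  set (F n w := (forall i, (i < n)%nat -> den a w (orb (iterf i g k))) /\
                den b w (orb (iterf n g k))).
  assert (downF : forall n, downset le (F n)).
  { intros n w v [ha hb] hvw; split; [intros i Hi|]; eapply den_downset; eauto. }
  assert (prefix : forall n, mass sample (F n) =
            min_prefix (fun i => weighted_val a (iterf i g k)) n (weighted_val b (iterf n g k)))
    by (intros n; apply (mass_prefix le); auto; intros; apply den_downset).
  unfold weighted_val at 3.
  rewrite (mass_ext sample _ (fun w => exists n, F n w))
    by (intros w; rewrite hc; unfold F; setoid_rewrite fg; reflexivity).
  destruct (mass_union le sample lin F downF) as [upper least]; split.
  - intros x [n ->]; rewrite <- prefix; apply upper; eauto.
  - intros bnd hb; apply least; intros x [n ->]; apply hb; exists n; apply prefix.
Qed.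

Lemma weighted_val_real : real_valuation Z.succ Z.pred weighted_val.
Proof.
  split; [intros; apply weight_bounds|]; intros k.
  pose proof (fun w => proj2 val w (orb k)) as clauses.
  repeat match goal with |- _ /\ _ => split end.
  - intros a b; unfold weighted_val; rewrite <- (mass_and le sample lin)
      by apply den_downset; apply mass_ext; intros w; apply (clauses w).
  - intros a b; unfold weighted_val; rewrite <- (mass_or le sample lin)
      by apply den_downset; apply mass_ext; intros w; apply (clauses w).
  - intros a b; apply weighted_imp.
  - intros a b; apply weighted_coimp.
  - intros a; apply mass_ext; intros w; rewrite (orbit_succ S Sinv t0 flow).
    apply (clauses w).
  - intros a; apply mass_ext; intros w; rewrite (orbit_pred S Sinv t0 flow).
    apply (clauses w).
  - intros a; apply (weighted_glb S Z.succ (orbit_iter_S S Sinv t0 flow)).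
    intros w; apply (clauses w).
  - intros a; apply (weighted_glb Sinv Z.pred (orbit_iter_Sinv S Sinv t0 flow)).
    intros w; apply (clauses w).
  - intros a b; apply (weighted_lub S Z.succ (orbit_iter_S S Sinv t0 flow)).
    intros w; apply (clauses w).
  - intros a b; apply (weighted_lub Sinv Z.pred (orbit_iter_Sinv S Sinv t0 flow)).
    intros w; apply (clauses w).
Qed.

(* A refutation of phi at (w0, t0) yields a real valuation giving phi a value
   below that of Top, hence below 1. *)
Lemma frame_to_real (phi : form) : valid_real phi -> den phi w0 t0.
Proof.
  intros valid; apply NNPP; intros refuted.
  assert (top : den Top w0 t0) by (apply (proj2 val w0 t0); auto).
  pose proof (weighted_val_separation Top phi 0 w0 top refuted) as below_top.
  pose proof (valid Z Z.succ Z.pred weighted_val Z_flow weighted_val_real 0%Z).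
  pose proof (weight_bounds (fun m => den Top (sample m) (orb 0))).
  unfold weighted_val, mass in *; lra.
Qed.

End FrameToReal.

(** From a real valuation to a bi-relational valuation *)

Section RealToFrame.
Context {T : Type} (S Sinv : T -> T) (V : form -> T -> R).
Hypothesis flow : is_flow S Sinv.
Hypothesis val : real_valuation S Sinv V.
Variable t0 : T.

Local Notation orb := (orbit S Sinv t0).

Definition cut : Type :=
  { c : R | 0 < c < 1 /\ forall a k, c <> V a (orb k) }.

Definition cut_le (c d : cut) : Prop := proj1_sig c <= proj1_sig d.

Definition cut_den (a : form) (c : cut) (k : Z) : Prop := proj1_sig c <= V a (orb k).

Lemma cut_avoids (c : cut) (a : form) (k : Z) : proj1_sig c <> V a (orb k).
Proof. exact (proj2 (proj2_sig c) a k). Qed.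

(* Cuts are dense in (0,1): the values on the orbit are countably many. *)
Lemma cut_between (x y : R) : 0 <= x < y -> y <= 1 -> exists c : cut, x < proj1_sig c < y.
Proof.
  intros hxy hy.
  destruct (enumerable_prod _ _ enumerable_form enumerable_Z) as [enum onto].
  destruct (avoid_countable (fun m => V (fst (enum m)) (orb (snd (enum m)))) x y)
    as [c [hc avoids]]; [lra|].
  assert (is_cut : 0 < c < 1 /\ forall a k, c <> V a (orb k)).
  { split; [lra|]; intros a k; destruct (onto (a, k)) as [m hm].
    specialize (avoids m); rewrite hm in avoids; exact avoids. }
  now exists (exist _ c is_cut).
Qed.

(* Equal reals give equal cuts by proof irrelevance. *)
Lemma cut_le_linear : linear_order cut_le.
Proof.
  unfold cut_le; repeat split; intros; try lra.
  destruct u as [x hx], v as [y hy]; cbn in *.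
  assert (x = y) as <- by lra; f_equal; apply proof_irrelevance.
Qed.

(* Implication and co-implication: density of cuts provides the worlds
   that separate the values of a and b. *)
Lemma cut_imp (a b : form) (c : cut) (k : Z) :
  cut_den (Imp a b) c k <->
  forall d, cut_le d c -> cut_den a d k -> cut_den b d k.
Proof.
  destruct val as [bounds clauses]; destruct (clauses (orb k)) as (_ & _ & hI & _).
  destruct c as [c hc]; unfold cut_den, cut_le; cbn; rewrite hI.
  pose proof (bounds a (orb k)); pose proof (bounds b (orb k)).
  destruct Rle_dec as [ab|ba]; split.
  - intros _ [d hd] _; cbn; lra.
  - intros _; lra.
  - intros cb [d hd]; cbn; lra.
  - intros below; apply Rnot_lt_le; intros bc.
    destruct (cut_between (V b (orb k)) (Rmin (V a (orb k)) c)) as [d hd];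
      [split; [lra|]; apply Rmin_glb_lt; lra | pose proof (Rmin_r (V a (orb k)) c); lra|].
    pose proof (Rmin_l (V a (orb k)) c); pose proof (Rmin_r (V a (orb k)) c).
    specialize (below d); lra.
Qed.

Lemma cut_coimp (a b : form) (c : cut) (k : Z) :
  cut_den (Coimp a b) c k <->
  exists d, cut_le c d /\ cut_den a d k /\ ~ cut_den b d k.
Proof.
  pose proof (cut_avoids c a k) as ca.
  destruct val as [bounds clauses]; destruct (clauses (orb k)) as (_ & _ & _ & hC & _).
  destruct c as [c hc]; unfold cut_den, cut_le; cbn in *; rewrite hC.
  pose proof (bounds a (orb k)); pose proof (bounds b (orb k)).
  destruct Rle_dec as [ab|ba]; split.
  - lra.
  - intros ([d hd] & ? & ? & ?); cbn in *; lra.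
  - intros ca'.
    destruct (cut_between (Rmax c (V b (orb k))) (V a (orb k))) as [d hd];
      [split; [pose proof (Rmax_l c (V b (orb k))); lra|]; apply Rmax_lub_lt; lra
      | lra |].
    pose proof (Rmax_l c (V b (orb k))); pose proof (Rmax_r c (V b (orb k))).
    exists d; lra.
  - intros ([d hd] & ? & ? & ?); cbn in *; lra.
Qed.

Lemma cut_glb (f : T -> T) (g : Z -> Z)
    (fg : forall n k, iterf n f (orb k) = orb (iterf n g k)) (a e : form) (c : cut) (k : Z) :
  is_glb (fun x => exists n, x = V a (iterf n f (orb k))) (V e (orb k)) ->
  cut_den e c k <-> forall n, cut_den a c (iterf n g k).
Proof.
  intros glb; unfold cut_den; rewrite (le_glb_iff _ _ _ glb); split.
  - intros h n; rewrite <- fg; eauto.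
  - intros h x [n ->]; rewrite fg; apply h.
Qed.

(* U and S, uniformly in the direction f of time and its index shift g; here
   it matters that the cut avoids the supremum. *)
Lemma cut_lub (f : T -> T) (g : Z -> Z)
    (fg : forall n k, iterf n f (orb k) = orb (iterf n g k)) (a b e : form) (c : cut) (k : Z) :
  is_lub (fun x => exists n, x = min_prefix (fun i => V a (iterf i f (orb k))) n
                                   (V b (iterf n f (orb k))))
         (V e (orb k)) ->
  cut_den e c k <-> exists n,
    (forall i, (i < n)%nat -> cut_den a c (iterf i g k)) /\ cut_den b c (iterf n g k).
Proof.
  intros lub; unfold cut_den; rewrite (le_lub_iff _ _ _ lub (cut_avoids c e k)); split.
  - intros (x & [n ->] & hx); apply le_min_prefix_iff in hx as [ha hb].
    exists n; rewrite <- fg; split; auto; intros i Hi; rewrite <- fg; auto.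
  - intros (n & ha & hb); eexists; split; [exists n; reflexivity|].
    apply le_min_prefix_iff; rewrite fg; split; auto; intros i Hi; rewrite fg; auto.
Qed.

Lemma cut_den_birel : birel_valuation cut_le Z.succ Z.pred cut_den.
Proof.
  destruct val as [bounds clauses]; split.
  { unfold cut_den, cut_le; intros; lra. }
  intros c k; destruct (clauses (orb k)) as (hA & hO & _ & _ & hN & hP & hG & hH & hU & hS).
  repeat match goal with |- _ /\ _ => split end.
  - intros a b; unfold cut_den; rewrite hA; apply le_Rmin_iff.
  - intros a b; unfold cut_den; rewrite hO; apply le_Rmax_iff.
  - intros a b; apply cut_imp.
  - intros a b; apply cut_coimp.
  - intros a; unfold cut_den; now rewrite hN, (orbit_succ S Sinv t0 flow).
  - intros a; unfold cut_den; now rewrite hP, (orbit_pred S Sinv t0 flow).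
  - intros a; apply (cut_glb S Z.succ (orbit_iter_S S Sinv t0 flow)), hG.
  - intros a; apply (cut_glb Sinv Z.pred (orbit_iter_Sinv S Sinv t0 flow)), hH.
  - intros a b; apply (cut_lub S Z.succ (orbit_iter_S S Sinv t0 flow)), hU.
  - intros a b; apply (cut_lub Sinv Z.pred (orbit_iter_Sinv S Sinv t0 flow)), hS.
Qed.

(* If V phi t0 < 1, a cut strictly between refutes phi at time 0. *)
Lemma real_to_frame (phi : form) : valid_rel phi -> V phi t0 = 1.
Proof.
  intros valid; destruct val as [bounds _]; pose proof (bounds phi t0).
  destruct (Req_dec (V phi t0) 1) as [|below]; [assumption|]; exfalso.
  destruct (cut_between (V phi t0) 1) as [c hc]; [lra | lra |].
  pose proof (valid cut Z cut_le Z.succ Z.pred cut_den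
                cut_le_linear Z_flow cut_den_birel c 0%Z) as holds.
  unfold cut_den in holds; cbn in holds; lra.
Qed.

End RealToFrame.

Theorem theorem3p3 : forall phi : form, valid_real phi <-> valid_rel phi.
Proof.
  intros phi; split.
  - intros valid W T le S Sinv den lin flow val w t.
    destruct (enumerable_prod _ _ (enumerable_prod _ _ enumerable_form enumerable_form)
                enumerable_Z) as [enum onto].
    exact (frame_to_real le S Sinv den lin flow val enum onto w t phi valid).
  - intros valid T S Sinv V flow val t.
    exact (real_to_frame S Sinv V flow val t phi valid).
Qed.
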